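(* Consider the coalition game and the closed-loop system described in the context (Euler–Lagrange agent dynamics with controller (C), auxiliary dynamics (A), multiplier dynamics (M), gradient-tracking dynamics (T) and action-estimation dynamics (E)). Suppose Assumptions 1–4 of the context hold. If a constant state $(\mathbf{x}^*,\hat\mu^*,\hat d^*,\hat{\mathbf{x}}^*,\eta^*,\vartheta^*,\omega^*,\lambda^*,\rho^*,\xi^*,\zeta^*,s^* )$ (with all time derivatives of these closed-loop states equal to zero) is an equilibrium of this closed-loop system, then $\mathbf{x}^*=\operatorname{col}\{x_{11}^*,\dots,x_{Nm_N}^*\}$ is a Nash equilibrium of the coalition game.
   Context: Coalition game. There are $N$ coalitions $\mathbb{N}=\{1,\dots,N\}$; coalition $i$ has agents $\mathbb{V}_i=\{1,\dots,m_i\}$; $n=\sum_i m_i$. Agent $(i,j)$ has action $x_{ij}\in\mathbb{R}^r$; $\mathbf{x}_i=\operatorname{col}\{x_{i1},\dots,x_{im_i}\}$, $\mathbf{x}=\operatorname{col}\{\mathbf{x}_1,\dots,\mathbf{x}_N\}=(\mathbf{x}_i,\mathbf{x}_{-i})$. Agent $(i,j)$ has cost $J_{ij}(\mathbf{x})$; coalition $i$ has cost $J_i(\mathbf{x})=\frac1{m_i}\sum_{j=1}^{m_i}J_{ij}(\mathbf{x})$. Local constraints $\Omega_{ij}=\{x_{ij}\in\mathbb{R}^r: B_{ij}x_{ij}\le b_{ij}\}$ and coupling constraints $\mathbb{X}_i=\{\mathbf{x}_i: \sum_{j}G_{ij}x_{ij}\le\sum_j g_{ij}\}$, with constant matrices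 $B_{ij}$, $G_{ij}\in\mathbb{R}^{p\times r}$ and vectors $b_{ij},g_{ij}$ (inequalities elementwise). Let $\bm\Omega=\prod_{i,j}\Omega_{ij}$, $\mathbb{X}=\prod_i\mathbb{X}_i$. A profile $\mathbf{x}^\star$ is a Nash equilibrium (NE) if for every $i$, $J_i(\mathbf{x}_i^\star,\mathbf{x}_{-i}^\star)\le J_i(\mathbf{x}_i,\mathbf{x}_{-i}^\star)$ for all $\mathbf{x}_i$ with $(\mathbf{x}_i,\mathbf{x}_{-i}^\star)\in\bm\Omega\cap\mathbb{X}$. Assumption 1: each $J_{ij}$ is continuously differentiable and $\hbar$-strongly convex in $\mathbf{x}_i$ for any fixed $\mathbf{x}_{-i}\in\prod_{k\ne i}\bm\Omega_k$. Assumption 2: each $\partial J_{ij}/\partial\mathbf{x}_i$ is globally Lipschitz with constant $\ell$. Assumption 3: for each $i$ there is $\mathbf{x}_i$ with $\sum_j G_{ij}x_{ij}<\sum_j g_{ij}$ and $B_{ij}x_{ij}<b_{ij}$ for all $j$. Assumption 4: for each $i$ the communication graph $\mathcal{G}_i$ on $\mathbb{V}_i$ (adjacency $[a^i_{jl}]$, symmetric 0/1) is undirected and connected; the graph $\bar{\mathcal{G}}$ on all $n$ agents, reindexed so agent $(i,j)$ has index $\sum_{l<i}m_l+j$, with adjacency $[\bar a_{pl}]$ ($\bar a_{pl}=1$ iff $(p,l)$ is an edge), is directed and strongly connected. Agent dynamics: $E_{ij}(x_{ij})\ddot x_{ij}+C_{ij}(x_{ij},\dot x_{ij})\dot x_{ij}+D_{ij}(x_{ij})=u_{ij}+d_{ij}$,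 where $d_{ij}(t)$ is a disturbance bounded by an unknown constant $\tilde d_{ij}$, and the Euler–Lagrange structure admits a known regressor $\Upsilon_{ij}$ with $E_{ij}(x_{ij})\hat y+C_{ij}(x_{ij},\dot x_{ij})\tilde y+D_{ij}(x_{ij})=\Upsilon_{ij}(x_{ij},\dot x_{ij},\hat y,\tilde y)\mu_{ij}$ for all $\hat y,\tilde y$, with unknown constant $\mu_{ij}$. $\mathcal{P}_+$ is the elementwise projection onto $[0,\infty)$; $\operatorname{sgn}$ is elementwise sign. (C) $u_{ij}=\Upsilon_{ij}(x_{ij},\dot x_{ij},\ddot{\hat x}_{ij},\dot{\hat x}_{ij})\hat\mu_{ij}-\gamma e_{ij}-\operatorname{sgn}(e_{ij})\hat d_{ij}$, $\dot{\hat\mu}_{ij}=-\Upsilon_{ij}^\top e_{ij}$, $\dot{\hat d}_{ij}=e_{ij}^\top\operatorname{sgn}(e_{ij})$ ($\hat d_{ij}$ scalar), $e_{ij}=\dot x_{ij}-\dot{\hat x}_{ij}$, $\dot{\hat x}_{ij}=\vartheta_{ij}-(x_{ij}-\eta_{ij})$. (A) $\dot\eta_{ij}=\vartheta_{ij}$, $\dot\vartheta_{ij}=-\alpha\vartheta_{ij}-\big(\xi_{ijj}+G_{ij}^\top\mathcal{P}_+(\lambda_{ij})+B_{ij}^\top\mathcal{P}_+(\omega_{ij}+B_{ij}\eta_{ij}-b_{ij})\big)$. (M) $\dot\omega_{ij}=B_{ij}\vartheta_{ij}-\omega_{ij}+\mathcal{P}_+(\omega_{ij}+B_{ij}\eta_{ij}-b_{ij})$;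 $\dot\lambda_{ij}=-\lambda_{ij}+\mathcal{P}_+(\lambda_{ij})+G_{ij}\eta_{ij}-g_{ij}-\sum_l a^i_{jl}(\rho_{ij}-\rho_{il})-\sum_l a^i_{jl}(\mathcal{P}_+(\lambda_{ij})-\mathcal{P}_+(\lambda_{il}))$; $\dot\rho_{ij}=\sum_l a^i_{jl}(\mathcal{P}_+(\lambda_{ij})-\mathcal{P}_+(\lambda_{il}))$, with $\lambda_{ij},\rho_{ij}\in\mathbb{R}^p$. (T) for $k\in\mathbb{V}_i$: $\dot\xi_{ijk}=-\beta\big(\xi_{ijk}+\sum_l a^i_{jl}(\xi_{ijk}-\xi_{ilk})+\sum_l a^i_{jl}(\zeta_{ijk}-\zeta_{ilk})-\frac{\partial J_{ij}}{\partial x_{ik}}(\chi_{ij})\big)$, $\dot\zeta_{ijk}=\beta\sum_l a^i_{jl}(\xi_{ijk}-\xi_{ilk})$, where $\chi_{ij}=\operatorname{col}\{s_{p,1},\dots,s_{p,n}\}\in\mathbb{R}^{rn}$ with $p=\sum_{l<i}m_l+j$, and $\frac{\partial J_{ij}}{\partial x_{ik}}(\chi_{ij})$ is the gradient of $J_{ij}$ with respect to the block of agent $(i,k)$ evaluated at $\chi_{ij}$. (E) Writing $\varsigma_p:=\eta_{ij}$ for the reindexed agent $p$, each agent $p$ keeps estimates $s_{p,l}\in\mathbb{R}^r$ ($l\ne p$), $s_{p,p}=\varsigma_p$, and with $s_{l,-p}=\operatorname{col}\{s_{l,q}\}_{q\ne p}$: $\dot s_{p,-p}=-\kappa\sum_{l=1}^n\bar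 a_{pl}(s_{p,-p}-s_{l,-p})$. Here $\alpha,\beta,\gamma,\kappa>0$ are constant gains. *)

From HB Require Import structures.
From mathcomp Require Import all_boot all_order all_algebra.
From mathcomp Require Import all_classical all_reals all_analysis.
Unset Printing Implicit Defensive.
Import Order.TTheory GRing.Theory Num.Theory.
Import numFieldNormedType.Exports.
Local Open Scope ring_scope.

Section CoalitionGame.
Variable R : realType.

Definition vle {n} (u v : 'cV[R]_n) := forall k, u k 0 <= v k 0.
Definition vlt {n} (u v : 'cV[R]_n) := forall k, u k 0 < v k 0.
Definition pplus {n} (v : 'cV[R]_n) : 'cV[R]_n := map_mx (fun a => Num.max a 0) v.
Definition vsgn {n} (v : 'cV[R]_n) : 'cV[R]_n := map_mx (fun a => Num.sg a) v.
Definition sqn {n} (v : 'cV[R]_n) : R := \sum_k (v k 0) ^+ 2.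

Variables (N : nat) (m : 'I_N -> nat) (r p : nat).

(* agents (i,j), i a coalition, j in V_i *)
Definition agent := {i : 'I_N & 'I_(m i)}.
Definition ag (i : 'I_N) (j : 'I_(m i)) : agent := existT _ i j.
(* action profiles x = col{x_ij} *)
Definition profile := agent -> 'cV[R]_r.
(* (y_i, x_{-i}) : coalition i's block taken from y, the rest from x *)
Definition mix (i : 'I_N) (y x : profile) : profile :=
  fun a => if tag a == i then y a else x a.
Definition setblock (x : profile) (c : agent) (v : 'cV[R]_r) : profile :=
  fun a => if a == c then v else x a.
Definition psqn (x : profile) : R := \sum_a sqn (x a).
Definition coal_sqn (i : 'I_N) (x : profile) : R :=
  \sum_(a | tag a == i) sqn (x a).

Variables (qB : forall i, 'I_(m i) -> nat)
  (B : forall i (j : 'I_(m i)), 'M[R]_(qB i j, r))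
  (b : forall i (j : 'I_(m i)), 'cV[R]_(qB i j))
  (G : forall i, 'I_(m i) -> 'M[R]_(p, r))
  (g : forall i, 'I_(m i) -> 'cV[R]_p).

Definition in_Omega_ij i (j : 'I_(m i)) (v : 'cV[R]_r) := vle (B i j *m v) (b i j).
Definition in_Omega (x : profile) := forall i (j : 'I_(m i)), in_Omega_ij i j (x (ag i j)).
Definition in_X_i (i : 'I_N) (x : profile) :=
  vle (\sum_(j < m i) G i j *m x (ag i j)) (\sum_(j < m i) g i j).
Definition in_X (x : profile) := forall i, in_X_i i x.

Variable J : agent -> profile -> R.
Definition Jc (i : 'I_N) (x : profile) : R := (m i)%:R^-1 * \sum_(j < m i) J (ag i j) x.

Definition is_NE (xs : profile) := forall (i : 'I_N) (y : profile),
  in_Omega (mix i y xs) /\ in_X (mix i y xs) -> Jc i xs <= Jc i (mix i y xs).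

(* gJ a c x = dJ_a/dx_c (x) *)
Variable gJ : agent -> agent -> profile -> 'cV[R]_r.

(* Assumption 1 (first part): J_a continuously differentiable with block
   gradients gJ a c (block partial derivatives exist and are continuous) *)
Definition C1_with_grad :=
  (forall a c (x : profile) (v : 'cV[R]_r),
     is_derive (0 : R) (1 : R) (fun t : R => J a (setblock x c (x c + t *: v)))
               (\sum_k gJ a c x k 0 * v k 0))
  /\ (forall a c (x : profile) (e : R), 0 < e -> exists2 d : R, 0 < d &
        forall y : profile, (forall c' k, `|y c' k 0 - x c' k 0| < d) ->
        forall k, `|gJ a c y k 0 - gJ a c x k 0| < e).

Definition strongly_convex_coal (hb : R) :=
  0 < hb /\
  forall (a : agent) (x : profile),
    (forall c : agent, tag c != tag a -> in_Omega_ij (tag c) (tagged c) (x c)) ->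
    forall (y z : profile) (t : R), 0 <= t <= 1 ->
      J a (mix (tag a) (fun c => t *: y c + (1 - t) *: z c) x)
      <= t * J a (mix (tag a) y x) + (1 - t) * J a (mix (tag a) z x)
         - hb / 2 * t * (1 - t) * coal_sqn (tag a) (fun c => y c - z c).

Definition grad_lipschitz (ell : R) :=
  forall (a : agent) (x y : profile),
    Num.sqrt (\sum_(c | tag c == tag a) sqn (gJ a c x - gJ a c y))
    <= ell * Num.sqrt (psqn (fun c => x c - y c)).

Definition slater :=
  forall i : 'I_N, exists x : profile,
    vlt (\sum_(j < m i) G i j *m x (ag i j)) (\sum_(j < m i) g i j) /\
    forall j : 'I_(m i), vlt (B i j *m x (ag i j)) (b i j).

Definition graphs_ok (adj : forall i, rel 'I_(m i)) (abar : rel agent) :=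
  (forall i, symmetric (adj i) /\ forall j l, connect (adj i) j l) /\
  (forall u v : agent, connect abar u v).

Definition EL_regressor
  (Ee : forall i, 'I_(m i) -> 'cV[R]_r -> 'M[R]_r)
  (Ce : forall i, 'I_(m i) -> 'cV[R]_r -> 'cV[R]_r -> 'M[R]_r)
  (De : forall i, 'I_(m i) -> 'cV[R]_r -> 'cV[R]_r)
  (qmu : forall i, 'I_(m i) -> nat)
  (Ups : forall i (j : 'I_(m i)), 'cV[R]_r -> 'cV[R]_r -> 'cV[R]_r -> 'cV[R]_r ->
          'M[R]_(r, qmu i j))
  (mu : forall i (j : 'I_(m i)), 'cV[R]_(qmu i j)) :=
  forall i (j : 'I_(m i)) (x xd yh yt : 'cV[R]_r),
    Ee i j x *m yh + Ce i j x xd *m yt + De i j x = Ups i j x xd yh yt *m mu i j.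

Definition bounded_disturbance (dist : forall i, 'I_(m i) -> R -> 'cV[R]_r) :=
  forall i (j : 'I_(m i)), exists dt : R, forall t : R, Num.sqrt (sqn (dist i j t)) <= dt.

(* s_{p,l} with the convention s_{p,p} = eta_p *)
Definition sfull (eta : profile) (s : agent -> agent -> 'cV[R]_r) (a : agent) : profile :=
  fun l => if l == a then eta a else s a l.

Definition closed_loop_equilibrium
  (adj : forall i, rel 'I_(m i)) (abar : rel agent)
  (Ee : forall i, 'I_(m i) -> 'cV[R]_r -> 'M[R]_r)
  (Ce : forall i, 'I_(m i) -> 'cV[R]_r -> 'cV[R]_r -> 'M[R]_r)
  (De : forall i, 'I_(m i) -> 'cV[R]_r -> 'cV[R]_r)
  (qmu : forall i, 'I_(m i) -> nat)
  (Ups : forall i (j : 'I_(m i)), 'cV[R]_r -> 'cV[R]_r -> 'cV[R]_r -> 'cV[R]_r ->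
          'M[R]_(r, qmu i j))
  (dist : forall i, 'I_(m i) -> R -> 'cV[R]_r)
  (alpha beta gamma kappa : R)
  (xs : profile) (muh : forall i (j : 'I_(m i)), 'cV[R]_(qmu i j))
  (dh : forall i, 'I_(m i) -> R) (xh eta th : profile)
  (om : forall i (j : 'I_(m i)), 'cV[R]_(qB i j))
  (lam rho : forall i, 'I_(m i) -> 'cV[R]_p)
  (xi zeta : forall i, 'I_(m i) -> 'I_(m i) -> 'cV[R]_r)
  (s : agent -> agent -> 'cV[R]_r) :=
  forall (i : 'I_N) (j : 'I_(m i)),
  let a := ag i j in
  let xdot : 'cV[R]_r := 0 in let xddot : 'cV[R]_r := 0 in
  let xhdot : 'cV[R]_r := 0 in let xhddot : 'cV[R]_r := 0 in
  let e := xdot - xhdot in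
  let u := Ups i j (xs a) xdot xhddot xhdot *m muh i j - gamma *: e - dh i j *: vsgn e in
  let sgm k : 'cV[R]_r := \sum_(l < m i) (nat_of_bool (adj i j l))%:R *: (xi i j k - xi i l k) in
  (forall t : R, Ee i j (xs a) *m xddot + Ce i j (xs a) xdot *m xdot + De i j (xs a)
                 = u + dist i j t) /\
  - ((Ups i j (xs a) xdot xhddot xhdot)^T *m e) = 0 /\
  (e^T *m vsgn e) 0 0 = 0 /\
  xhdot = th a - (xs a - eta a) /\
  th a = 0 /\
  - alpha *: th a - (xi i j j + (G i j)^T *m pplus (lam i j)
                     + (B i j)^T *m pplus (om i j + B i j *m eta a - b i j)) = 0 /\
  B i j *m th a - om i j + pplus (om i j + B i j *m eta a - b i j) = 0 /\
  - lam i j + pplus (lam i j) + G i j *m eta a - g i j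
    - \sum_(l < m i) (nat_of_bool (adj i j l))%:R *: (rho i j - rho i l)
    - \sum_(l < m i) (nat_of_bool (adj i j l))%:R *: (pplus (lam i j) - pplus (lam i l)) = 0 /\
  \sum_(l < m i) (nat_of_bool (adj i j l))%:R *: (pplus (lam i j) - pplus (lam i l)) = 0 /\
  (forall k : 'I_(m i),
    - beta *: (xi i j k + sgm k
               + \sum_(l < m i) (nat_of_bool (adj i j l))%:R *: (zeta i j k - zeta i l k)
               - gJ a (ag i k) (sfull eta s a)) = 0) /\
  (forall k : 'I_(m i), beta *: sgm k = 0) /\
  (forall q : agent, q != a ->
    - kappa *: \sum_(l : agent) (nat_of_bool (abar a l))%:R *:
                 (sfull eta s a q - sfull eta s l q) = 0).

End CoalitionGame.

Arguments is_NE {R N m r p qB} B b G g J xs.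
Arguments C1_with_grad {R N m r} J gJ.
Arguments strongly_convex_coal {R N m r qB} B b J hb.
Arguments grad_lipschitz {R N m r} gJ ell.
Arguments slater {R N m r p qB} B b G g.
Arguments graphs_ok {N m} adj abar.
Arguments EL_regressor {R N m r} Ee Ce De {qmu} Ups mu.
Arguments bounded_disturbance {R N m r} dist.
Arguments closed_loop_equilibrium {R N m r p qB} B b G g gJ adj abar Ee Ce De {qmu} Ups dist
  alpha beta gamma kappa xs muh dh xh eta th om lam rho xi zeta s.

(* Reading
   the equations through the maximum principle for graph Laplacians, the action
   estimates agree with the true profile, the projected multipliers of a
   coalition agree, and the tracked gradients [xi_ikk] become the coalition
   average of the partial gradients.  Together with the projection fixed points
   these are exactly the KKT conditions of each coalition's problem, and since
   the coalition cost is convex in the coalition's own actions, a KKT point is a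
   best response: the gradient inequality turns the multiplier terms into
   complementary slackness against the feasibility of the deviation. *)

From HB Require Import structures.
From mathcomp Require Import all_boot all_order all_algebra.
From mathcomp Require Import all_classical all_reals all_analysis.
From mathcomp Require Import ring lra.
Import Order.TTheory GRing.Theory Num.Theory.
Import numFieldNormedType.Exports.

Local Open Scope classical_set_scope.
Local Open Scope ring_scope.

Definition dotv {R : pzRingType} {n : nat} (u v : 'cV[R]_n) : R := \sum_k u k 0 * v k 0.

Section DotProduct.
Context {R : comPzRingType} {n : nat}.
Implicit Types (u v w : 'cV[R]_n).

Lemma dotv0l v : dotv 0 v = 0.
Proof. by rewrite /dotv big1 // => k _; rewrite mxE mul0r. Qed.

Lemma dotvDl u v w : dotv (u + v) w = dotv u w + dotv v w.
Proof. by rewrite /dotv -big_split; apply: eq_bigr => k _; rewrite mxE mulrDl. Qed.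

Lemma dotvNl u v : dotv (- u) v = - dotv u v.
Proof. by rewrite /dotv -sumrN; apply: eq_bigr => k _; rewrite mxE mulNr. Qed.

Lemma dotvZl a u v : dotv (a *: u) v = a * dotv u v.
Proof. by rewrite /dotv mulr_sumr; apply: eq_bigr => k _; rewrite mxE mulrA. Qed.

Lemma dotv_suml (I : finType) (u : I -> 'cV[R]_n) v :
  dotv (\sum_i u i) v = \sum_i dotv (u i) v.
Proof.
rewrite /dotv exchange_big; apply: eq_bigr => k _.
by rewrite summxE mulr_suml.
Qed.

Lemma dotvNr u v : dotv u (- v) = - dotv u v.
Proof. by rewrite /dotv -sumrN; apply: eq_bigr => k _; rewrite mxE mulrN. Qed.

Lemma dotv_sumr (I : finType) u (v : I -> 'cV[R]_n) :
  dotv u (\sum_i v i) = \sum_i dotv u (v i).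
Proof.
rewrite /dotv exchange_big; apply: eq_bigr => k _.
by rewrite summxE mulr_sumr.
Qed.

Lemma dotv_trmx (q : nat) (M : 'M[R]_(q, n)) (u : 'cV[R]_q) v :
  dotv (M^T *m u) v = dotv u (M *m v).
Proof.
rewrite /dotv; under eq_bigr do rewrite mxE mulr_suml.
under [RHS]eq_bigr do rewrite mxE mulr_sumr.
rewrite exchange_big; apply: eq_bigr => k _; apply: eq_bigr => l _.
by rewrite mxE mulrCA mulrA.
Qed.

End DotProduct.

Lemma half_itv01 {R : numFieldType} : 0 <= (2^-1 : R) <= 1.
Proof. by rewrite invr_ge0 ler0n invf_le1 ?ler1n. Qed.

Section Dini.
Context {R : realType}.
Implicit Types (f : R -> R) (l : R).

Definition dini_ub f l := forall e : R, 0 < e ->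
  exists2 d : R, 0 < d & forall t : R, 0 < t < d -> f t - f 0 <= t * (l + e).

Definition convex_fun f := forall u v t : R, 0 <= t <= 1 ->
  f (t * u + (1 - t) * v) <= t * f u + (1 - t) * f v.

Lemma is_derive_dini_ub f l : is_derive (0 : R) (1 : R) f l -> dini_ub f l.
Proof.
case=> f_derivable f'0 e e_gt0.
have : h^-1 *: ((f \o shift 0) (h *: (1 : R)) - f 0) @[h --> (0 : R)^'] --> l.
  by rewrite -f'0; exact: f_derivable.
move=> /cvgrPdist_lt /(_ e e_gt0) /nbhs_ballP [d /= d_gt0 near_l].
exists d => // t /andP [t_gt0 t_lt_d].
have /near_l /(_ (lt0r_neq0 t_gt0)) /= : ball 0 d t.
  by rewrite /ball /= sub0r normrN gtr0_norm.
rewrite /GRing.scale /= mulr1 addr0 => /ltr_distlCDr.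
set q := t^-1 * _; have -> : f t - f 0 = t * q by rewrite /q mulrA mulfV ?mul1r ?gt_eqF.
by move=> q_lt; rewrite ler_wpM2l ?ltW.
Qed.

Lemma convex_dini_ub_le f l : convex_fun f -> dini_ub f l -> f 0 - f (-1) <= l.
Proof.
move=> f_cvx f_ub; apply/ler_addgt0Pr => e e_gt0.
have [d d_gt0 incr_le] := f_ub e e_gt0.
pose t := Num.min (d / 2) 1.
have t_gt0 : 0 < t by rewrite lt_min ltr01 divr_gt0.
have t01 : 0 <= t <= 1 by rewrite ltW //= ge_min lexx orbT.
have t_lt_d : t < d by rewrite gt_min ltr_pdivrMr // ltr_pMr // ltr1n.
(* [0] is the midpoint of [-t] and [t], and [-t] lies between [-1] and [0]. *)
have f0_le : f 0 <= 2^-1 * f t + 2^-1 * f (- t).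
  have := f_cvx t (- t) 2^-1 half_itv01.
  have -> : 1 - 2^-1 = 2^-1 :> R by field.
  by have -> : 2^-1 * t + 2^-1 * - t = 0 :> R by field.
have fNt_le : f (- t) <= t * f (-1) + (1 - t) * f 0.
  by have := f_cvx (-1) 0 t t01; rewrite mulr0 addr0 mulrN1.
have := incr_le t; rewrite t_gt0 t_lt_d => /(_ isT) ft_le.
have : t * (f 0 - f (-1)) <= t * (l + e) by lra.
by rewrite ler_pM2l.
Qed.

End Dini.

(* Only block partial derivatives are available, so the gradient inequality is
   derived from convexity alone: midpoint convexity makes the upper Dini
   derivative along a direction subadditive, hence bounded by the sum of the
   block partials. *)
Section BlockConvexGradient.
Context {R : realType} {T : finType} {r : nat} {F : (T -> 'cV[R]_r) -> R}.
Hypothesis F_convex : forall (y z : T -> 'cV[R]_r) (t : R), 0 <= t <= 1 ->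
  F (fun c => t *: y c + (1 - t) *: z c) <= t * F y + (1 - t) * F z.
Context {x0 g : T -> 'cV[R]_r}.
Hypothesis F_partial : forall c (v : 'cV[R]_r),
  is_derive (0 : R) (1 : R) (fun t => F (fun a => if a == c then x0 c + t *: v else x0 a))
    (dotv (g c) v).

Let line (d : T -> 'cV[R]_r) (t : R) : R := F (fun c => x0 c + t *: d c).

Let line0 d : line d 0 = F x0.
Proof. by congr F; apply: funext => c; rewrite scale0r addr0. Qed.

Let line_convex d : convex_fun (line d).
Proof.
move=> u v t t01; rewrite /line.
rewrite (_ : (fun c => _) = fun c => t *: (x0 c + u *: d c) + (1 - t) *: (x0 c + v *: d c)).
  exact: F_convex.
by apply: funext => c; apply/matrixP => k l; rewrite !mxE; ring.
Qed.

Let dini_ub_line0 : dini_ub (line (fun=> 0)) 0.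
Proof.
move=> e e_gt0; exists 1 => // t /andP [t_gt0 _].
have -> : line (fun=> 0) t = F x0 by congr F; apply: funext => c; rewrite scaler0 addr0.
by rewrite line0 subrr add0r mulr_ge0 ?ltW.
Qed.

Let dini_ub_lineD d1 d2 l1 l2 : dini_ub (line d1) l1 -> dini_ub (line d2) l2 ->
  dini_ub (line (fun c => d1 c + d2 c)) (l1 + l2).
Proof.
move=> ub1 ub2 e e_gt0; have e2_gt0 : 0 < e / 2 by rewrite divr_gt0.
have [del1 del1_gt0 incr1] := ub1 _ e2_gt0; have [del2 del2_gt0 incr2] := ub2 _ e2_gt0.
exists (Num.min del1 del2 / 2); first by rewrite divr_gt0 // lt_min del1_gt0.
move=> t /andP [t_gt0]; rewrite ltr_pdivlMr // mulrC lt_min => /andP [t_lt1 t_lt2].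
have t2_gt0 : 0 < 2 * t by rewrite mulr_gt0.
have := incr1 (2 * t); rewrite t2_gt0 t_lt1 line0 => /(_ isT) incr1t.
have := incr2 (2 * t); rewrite t2_gt0 t_lt2 line0 => /(_ isT) incr2t.
have mid : line (fun c => d1 c + d2 c) t <= 2^-1 * line d1 (2 * t) + 2^-1 * line d2 (2 * t).
  have := F_convex (fun c => x0 c + (2 * t) *: d1 c) (fun c => x0 c + (2 * t) *: d2 c) 2^-1 half_itv01.
  rewrite (_ : 1 - 2^-1 = 2^-1); last by field.
  by congr (F _ <= _); apply: funext => c; apply/matrixP => k l; rewrite !mxE; field.
have -> : line (fun c => d1 c + d2 c) 0 = F x0 by exact: line0.
move: mid incr1t incr2t; lra.
Qed.

Let dini_ub_line_block c v :
  dini_ub (line (fun a => if a == c then v else 0)) (dotv (g c) v).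
Proof.
rewrite (_ : line _ = fun t => F (fun a => if a == c then x0 c + t *: v else x0 a)).
  exact: is_derive_dini_ub.
apply: funext => t; congr F; apply: funext => a.
by case: eqP => [->|_]; rewrite ?scaler0 ?addr0.
Qed.

Let dini_ub_line d : dini_ub (line d) (\sum_c dotv (g c) (d c)).
Proof.
pose dir s a := \sum_(c <- s) (if a == c then d c else 0).
suff dir_ub s : dini_ub (line (dir s)) (\sum_(c <- s) dotv (g c) (d c)).
  have d_dir : d = dir (index_enum T).
    apply: funext => a.
    by rewrite /dir -big_mkcond (big_pred1 a) // => c; rewrite /= eq_sym.
  by rewrite {1}d_dir; exact: dir_ub.
elim: s => [|c s IH].
  rewrite big_nil (_ : dir [::] = fun=> 0); first exact: dini_ub_line0.
  by apply: funext => a; rewrite /dir big_nil.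
rewrite big_cons (_ : dir (c :: s) = fun a => (if a == c then d c else 0) + dir s a).
  exact: dini_ub_lineD (dini_ub_line_block _ _) IH.
by apply: funext => a; rewrite /dir big_cons.
Qed.

Theorem convex_gradient_ineq y : \sum_c dotv (g c) (y c - x0 c) <= F y - F x0.
Proof.
have := convex_dini_ub_le _ _ (line_convex (fun c => x0 c - y c)) (dini_ub_line _).
have -> : line (fun c => x0 c - y c) 0 = F x0 by exact: line0.
have -> : line (fun c => x0 c - y c) (-1) = F y.
  by congr F; apply: funext => c; rewrite scaleN1r opprB addrC subrK.
under eq_bigr do rewrite -opprB dotvNr.
rewrite sumrN; lra.
Qed.

End BlockConvexGradient.

Section Laplacian.
Context {T : finType} {e : rel T}.

Lemma laplacian_sum_sym {R : pzRingType} {V : lmodType R} (z : T -> V) :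
  symmetric e -> \sum_j \sum_l (e j l)%:R *: (z j - z l) = 0 :> V.
Proof.
move=> e_sym; under eq_bigr do under eq_bigr do rewrite scalerBr.
under eq_bigr do rewrite sumrB; rewrite sumrB exchange_big /=; apply/eqP; rewrite subr_eq0.
by apply/eqP/eq_bigr => j _; apply: eq_bigr => l _; rewrite e_sym.
Qed.

Hypothesis e_conn : forall u w, connect e u w.

(* Maximum principle: along a path from a maximiser to [q] every vertex is a
   maximiser, since all terms of its Laplacian sum are nonnegative. *)
Lemma harmonic_le_sink {R : realDomainType} (v : T -> R) (q : T) :
  (forall a, a != q -> \sum_l (e a l)%:R * (v a - v l) = 0) -> forall a, v a <= v q.
Proof.
move=> v_harm; have [am _ am_max] := @arg_maxP _ R T q predT v isT.
suff -> : v q = v am by move=> a; exact: am_max.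
suff path_max pth a : v a = v am -> path e a pth -> q = last a pth -> v q = v am.
  by have [pth] := connectP (e_conn am q); exact: path_max.
elim: pth a => [|c pth IH] a va_max /=; first by move=> _ ->.
case/andP=> e_ac c_path q_last; case: (eqVneq a q) => [<- //|a_neq_q].
apply: (IH c) => //; rewrite -va_max; apply/eqP; rewrite eq_sym -subr_eq0.
have term_ge0 l : 0 <= (e a l)%:R * (v a - v l).
  by rewrite mulr_ge0 // subr_ge0 va_max; exact: am_max.
have /psumr_eq0P/(_ c isT) := v_harm a a_neq_q.
by rewrite e_ac mul1r => ->.
Qed.

Lemma harmonic_eq_sink {R : realDomainType} (v : T -> R) (q : T) :
  (forall a, a != q -> \sum_l (e a l)%:R * (v a - v l) = 0) -> forall a, v a = v q.
Proof.
move=> v_harm a; apply/eqP; rewrite eq_le harmonic_le_sink //= -lerN2.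
apply: (harmonic_le_sink (fun a => - v a)) => b b_neq_q.
rewrite (eq_bigr (fun l => - ((e b l)%:R * (v b - v l)))) => [|l _]; last by ring.
by rewrite sumrN v_harm ?oppr0.
Qed.

Lemma harmonic_cV_eq_sink {R : realDomainType} {n : nat} (v : T -> 'cV[R]_n) (q : T) :
  (forall a, a != q -> \sum_l (e a l)%:R *: (v a - v l) = 0) -> forall a, v a = v q.
Proof.
move=> v_harm a; apply/matrixP => k k'; rewrite [k']ord1.
apply: (harmonic_eq_sink (fun a => v a k 0)) => b b_neq_q.
have /(congr1 (fun M : 'cV_n => M k 0)) := v_harm b b_neq_q.
rewrite /= summxE mxE => entry_eq0; rewrite -[RHS]entry_eq0.
by apply: eq_bigr => l _; rewrite !mxE.
Qed.

End Laplacian.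

Definition complementary {R : realType} {n : nat} (u v : 'cV[R]_n) :=
  forall k, 0 <= u k 0 /\ u k 0 * v k 0 = 0.

Lemma complementary_dotv_le0 {R : realType} {n : nat} (u w c w' : 'cV[R]_n) :
  complementary u (w - c) -> vle R w' c -> dotv u (w' - w) <= 0.
Proof.
move=> u_compl w'_le_c; apply: sumr_le0 => k _; have [u_ge0 u_w] := u_compl k.
have -> : (w' - w) k 0 = (w' - c) k 0 - (w - c) k 0 by rewrite !mxE; ring.
by rewrite mulrBr u_w subr0 mulr_ge0_le0 // !mxE subr_le0.
Qed.

Lemma sum_coalition {R : nmodType} {N : nat} {m : 'I_N -> nat} (i : 'I_N)
    (f : agent N m -> R) :
  \sum_(c | tag c == i) f c = \sum_(k < m i) f (ag N m i k).
Proof.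
rewrite -(big_pred1_eq (+%R : Monoid.law (0 : R)) i (fun i' => \sum_(k < m i') f (ag N m i' k))).
rewrite (sig_big_dep (fun i' => i' == i) (fun _ _ => true) (fun i' k => f (ag N m i' k))).
by apply: eq_big => [[i' k]|[i' k] _] //=; rewrite andbT.
Qed.

Section CoalitionCost.
Context {R : realType} {N : nat} {m : 'I_N -> nat} {r : nat}.
Context {qB : forall i, 'I_(m i) -> nat}
  {B : forall i (j : 'I_(m i)), 'M[R]_(qB i j, r)}
  {b : forall i (j : 'I_(m i)), 'cV[R]_(qB i j)}.
Context {J : agent N m -> profile R N m r -> R}
  {gJ : agent N m -> agent N m -> profile R N m r -> 'cV[R]_r}.

Local Notation mix := (mix R N m r).

Lemma mix_id i (x : profile R N m r) : mix i x x = x.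
Proof. by apply: funext => a; rewrite /mix; case: ifP. Qed.

Lemma mix_setblock i (x : profile R N m r) c v :
  mix i (setblock R N m r x c v) x = if tag c == i then setblock R N m r x c v else x.
Proof.
apply: funext => c'; rewrite /mix /setblock (fun_if (fun f => f c')) /=.
by case: (eqVneq c' c) => [->|_]; do ?case: ifP.
Qed.

Lemma strongly_convex_coal_convex hb : strongly_convex_coal B b J hb ->
  forall a (x : profile R N m r),
  (forall c, tag c != tag a -> in_Omega_ij R N m r qB B b (tag c) (tagged c) (x c)) ->
  forall (y z : profile R N m r) (t : R), 0 <= t <= 1 ->
  J a (mix (tag a) (fun c => t *: y c + (1 - t) *: z c) x)
    <= t * J a (mix (tag a) y x) + (1 - t) * J a (mix (tag a) z x).
Proof.
case=> hb_gt0 J_cvx a x x_feas y z t /[dup] t01 /andP [t_ge0 t_le1].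
apply: (le_trans (J_cvx a x x_feas y z t t01)).
rewrite gerBl !mulr_ge0 ?divr_ge0 ?subr_ge0 ?(ltW hb_gt0) //.
by apply: sumr_ge0 => c _; apply: sumr_ge0 => k _; exact: sqr_ge0.
Qed.

Hypothesis J_partial : forall a c (x : profile R N m r) (v : 'cV[R]_r),
  is_derive (0 : R) (1 : R) (fun t : R => J a (setblock R N m r x c (x c + t *: v)))
    (\sum_k gJ a c x k 0 * v k 0).

Lemma coalition_gradient_ineq hb (J_cvx : strongly_convex_coal B b J hb)
    a (x y : profile R N m r) :
  (forall c, tag c != tag a -> in_Omega_ij R N m r qB B b (tag c) (tagged c) (x c)) ->
  \sum_(c | tag c == tag a) dotv (gJ a c x) (y c - x c) <= J a (mix (tag a) y x) - J a x.
Proof.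
move=> x_feas; pose grad c := if tag c == tag a then gJ a c x else 0.
have grad_partial c v : is_derive (0 : R) (1 : R)
    (fun t => J a (mix (tag a) (setblock R N m r x c (x c + t *: v)) x)) (dotv (grad c) v).
  rewrite /grad; case: ifP => c_coal.
    rewrite (_ : (fun t => _) = fun t => J a (setblock R N m r x c (x c + t *: v))).
      exact: J_partial.
    by apply: funext => t; rewrite mix_setblock c_coal.
  rewrite dotv0l (_ : (fun t => _) = cst (J a x)); first exact: is_derive_cst.
  by apply: funext => t; rewrite mix_setblock c_coal.
have -> : \sum_(c | tag c == tag a) dotv (gJ a c x) (y c - x c)
    = \sum_c dotv (grad c) (y c - x c).
  by rewrite big_mkcond; apply: eq_bigr => c _; rewrite /grad; case: ifP; rewrite ?dotv0l.
have -> : J a x = J a (mix (tag a) x x) by rewrite mix_id.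
exact: (convex_gradient_ineq (strongly_convex_coal_convex hb J_cvx a x x_feas) grad_partial).
Qed.

Context {p : nat} {G : forall i, 'I_(m i) -> 'M[R]_(p, r)}
  {g : forall i, 'I_(m i) -> 'cV[R]_p}.

Theorem KKT_is_NE hb (J_cvx : strongly_convex_coal B b J hb) (x : profile R N m r)
    (L : forall i, 'cV[R]_p) (mu : forall i (j : 'I_(m i)), 'cV[R]_(qB i j)) :
  (forall i k, \sum_(j < m i) gJ (ag N m i j) (ag N m i k) x
     = - ((m i)%:R *: ((G i k)^T *m L i + (B i k)^T *m mu i k))) ->
  (forall i, complementary (L i)
     (\sum_(j < m i) G i j *m x (ag N m i j) - \sum_(j < m i) g i j)) ->
  (forall i k, complementary (mu i k) (B i k *m x (ag N m i k) - b i k)) ->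
  is_NE B b G g J x.
Proof.
move=> grad_eq L_compl mu_compl i y [y_Omega y_X].
have x_feas c : tag c != i -> in_Omega_ij R N m r qB B b (tag c) (tagged c) (x c).
  by case: c => i' j' /= i'_neq; have := y_Omega i' j'; rewrite /mix /= (negbTE i'_neq).
have mix_coal k : mix i y x (ag N m i k) = y (ag N m i k) by rewrite /mix /= eqxx.
pose w k := y (ag N m i k) - x (ag N m i k).
have kkt_le0 : \sum_k (dotv (L i) (G i k *m w k) + dotv (mu i k) (B i k *m w k)) <= 0.
  rewrite big_split /= -dotv_sumr -oppr_ge0 opprD; apply: addr_ge0; rewrite oppr_ge0.
    under eq_bigr do rewrite mulmxBr; rewrite sumrB; apply: complementary_dotv_le0 (L_compl i) _.
    by have := y_X i; rewrite /in_X_i; under eq_bigr do rewrite mix_coal.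
  apply: sumr_le0 => k _; rewrite mulmxBr; apply: complementary_dotv_le0 (mu_compl i k) _.
  by have := y_Omega i k; rewrite /in_Omega_ij mix_coal.
rewrite /Jc -subr_ge0 -mulrBr mulr_ge0 ?invr_ge0 ?ler0n // -sumrB.
apply: le_trans (ler_sum _ (fun j _ => coalition_gradient_ineq hb J_cvx (ag N m i j) x y x_feas)).
under eq_bigr do rewrite sum_coalition; rewrite /= exchange_big /=.
under eq_bigr do rewrite -dotv_suml grad_eq dotvNl dotvZl dotvDl !dotv_trmx.
by rewrite sumrN -mulr_sumr oppr_ge0 mulr_ge0_le0.
Qed.

End CoalitionCost.

Lemma pplus_fixed_complementary {R : realType} {n : nat} (u v : 'cV[R]_n) :
  pplus R (u + v) = u -> complementary u v.
Proof.
move=> /matrixP fixed k; have := fixed k 0; rewrite !mxE.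
case: (lerP 0 (u k 0 + v k 0)) => [uv_ge0|_ <-]; last by rewrite lexx mul0r.
move=> uv_eq_u; have v0 : v k 0 = 0 by lra.
by rewrite v0 mulr0; split=> //; lra.
Qed.

Lemma pplus_consensus_complementary {R : realType} {I : finType} {n : nat}
    (lam : I -> 'cV[R]_n) (j0 : I) (v : 'cV[R]_n) :
  (forall j, pplus R (lam j) = pplus R (lam j0)) ->
  \sum_j (pplus R (lam j) - lam j) + v = 0 -> complementary (pplus R (lam j0)) v.
Proof.
move=> consensus /matrixP residual k; rewrite mxE; split; first by rewrite le_max lexx orbT.
have [->|L_neq0] := eqVneq (Num.max (lam j0 k 0) 0) 0; first by rewrite mul0r.
suff -> : v k 0 = 0 by rewrite mulr0.
have := residual k 0; rewrite !mxE summxE big1 ?add0r // => j _.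
have /matrixP/(_ k 0) := consensus j; rewrite !mxE => Lj; move: L_neq0; rewrite -Lj.
by case: (lerP 0 (lam j k 0)); rewrite ?subrr ?eqxx.
Qed.

Section ClosedLoopEquilibrium.
Context {R : realType} {N : nat} {m : 'I_N -> nat} {r p : nat}.
Context {qB : forall i, 'I_(m i) -> nat}
  {B : forall i (j : 'I_(m i)), 'M[R]_(qB i j, r)}
  {b : forall i (j : 'I_(m i)), 'cV[R]_(qB i j)}
  {G : forall i, 'I_(m i) -> 'M[R]_(p, r)}
  {g : forall i, 'I_(m i) -> 'cV[R]_p}
  {gJ : agent N m -> agent N m -> profile R N m r -> 'cV[R]_r}
  {adj : forall i, rel 'I_(m i)} {abar : rel (agent N m)}
  {Ee : forall i, 'I_(m i) -> 'cV[R]_r -> 'M[R]_r}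
  {Ce : forall i, 'I_(m i) -> 'cV[R]_r -> 'cV[R]_r -> 'M[R]_r}
  {De : forall i, 'I_(m i) -> 'cV[R]_r -> 'cV[R]_r}
  {qmu : forall i, 'I_(m i) -> nat}
  {Ups : forall i (j : 'I_(m i)), 'cV[R]_r -> 'cV[R]_r -> 'cV[R]_r -> 'cV[R]_r ->
          'M[R]_(r, qmu i j)}
  {dist : forall i, 'I_(m i) -> R -> 'cV[R]_r}
  {alpha beta gamma kappa : R}
  {xs : profile R N m r} {muh : forall i (j : 'I_(m i)), 'cV[R]_(qmu i j)}
  {dh : forall i, 'I_(m i) -> R} {xh eta th : profile R N m r}
  {om : forall i (j : 'I_(m i)), 'cV[R]_(qB i j)}
  {lam rho : forall i, 'I_(m i) -> 'cV[R]_p}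
  {xi zeta : forall i, 'I_(m i) -> 'I_(m i) -> 'cV[R]_r}
  {s : agent N m -> agent N m -> 'cV[R]_r}.
Hypothesis eqm : closed_loop_equilibrium B b G g gJ adj abar Ee Ce De Ups dist
  alpha beta gamma kappa xs muh dh xh eta th om lam rho xi zeta s.

Lemma equilibrium_th0 a : th a = 0.
Proof. by case: a => i j; have /= [_ [_ [_ [_ [th0 _]]]]] := eqm i j. Qed.

Lemma equilibrium_xs_eta : xs = eta.
Proof.
apply: funext => -[i j]; have /= [_ [_ [_ [xh_eq _]]]] := eqm i j.
by apply/eqP; move: xh_eq; rewrite equilibrium_th0 sub0r => /esym/eqP; rewrite oppr_eq0 subr_eq0.
Qed.

Hypotheses (beta_gt0 : 0 < beta) (kappa_gt0 : 0 < kappa).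
Hypotheses (adj_sym : forall i, symmetric (adj i))
  (adj_conn : forall i j l, connect (adj i) j l) (abar_conn : forall u v, connect abar u v).

Lemma equilibrium_estimates a : sfull R N m r eta s a = eta.
Proof.
apply: funext => q; rewrite {1}/sfull; case: eqP => [->//|/eqP q_neq_a].
suff harm a' : a' != q ->
    \sum_l (abar a' l)%:R *: (sfull R N m r eta s a' q - sfull R N m r eta s l q) = 0.
  by have := harmonic_cV_eq_sink abar_conn _ q harm a; rewrite /sfull eqxx (negbTE q_neq_a).
case: a' => i j a'_neq_q; have /= [_ [_ [_ [_ [_ [_ [_ [_ [_ [_ [_ est_eq]]]]]]]]]]] := eqm i j.
have := est_eq q; rewrite eq_sym a'_neq_q => /(_ isT) /eqP.
by rewrite scaler_eq0 oppr_eq0 (gt_eqF kappa_gt0) => /eqP.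
Qed.

Lemma equilibrium_pplus_lam i j j' : pplus R (lam i j) = pplus R (lam i j').
Proof.
apply: (harmonic_cV_eq_sink (adj_conn i) (fun j => pplus R (lam i j))) => j'' _.
by have /= [_ [_ [_ [_ [_ [_ [_ [_ [cons_eq _]]]]]]]]] := eqm i j''.
Qed.

Lemma equilibrium_xi_consensus i j k : xi i j k = xi i k k.
Proof.
apply: (harmonic_cV_eq_sink (adj_conn i) (fun j => xi i j k)) => j' _.
have /= [_ [_ [_ [_ [_ [_ [_ [_ [_ [_ [sgm_eq _]]]]]]]]]]] := eqm i j'.
by move/eqP: (sgm_eq k); rewrite scaler_eq0 (gt_eqF beta_gt0) => /eqP.
Qed.

Lemma equilibrium_grad_sum i k :
  \sum_(j < m i) gJ (ag N m i j) (ag N m i k) xs = (m i)%:R *: xi i k k.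
Proof.
have grad_eq j : gJ (ag N m i j) (ag N m i k) xs
    = xi i j k + \sum_l (adj i j l)%:R *: (zeta i j k - zeta i l k).
  have /= [_ [_ [_ [_ [_ [_ [_ [_ [_ [xi_eq [sgm_eq _]]]]]]]]]]] := eqm i j.
  move/eqP: (sgm_eq k); rewrite scaler_eq0 (gt_eqF beta_gt0) /= => /eqP sgm0.
  move/eqP: (xi_eq k); rewrite scaler_eq0 oppr_eq0 (gt_eqF beta_gt0) /= sgm0 addr0.
  by rewrite equilibrium_estimates -equilibrium_xs_eta subr_eq0 => /eqP.
rewrite (eq_bigr _ (fun j _ => grad_eq j)) big_split /= (laplacian_sum_sym _ (adj_sym i)) addr0.
by rewrite (eq_bigr _ (fun j _ => equilibrium_xi_consensus i j k)) sumr_const card_ord scaler_nat.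
Qed.

Lemma equilibrium_om_fixed i k :
  pplus R (om i k + (B i k *m xs (ag N m i k) - b i k)) = om i k.
Proof.
have /= [_ [_ [_ [_ [_ [_ [om_eq _]]]]]]] := eqm i k.
move: om_eq; rewrite equilibrium_th0 mulmx0 sub0r addrC addrA -equilibrium_xs_eta.
by move/eqP; rewrite subr_eq0 => /eqP.
Qed.

Lemma equilibrium_xi_diag i k :
  xi i k k = - ((G i k)^T *m pplus R (lam i k) + (B i k)^T *m om i k).
Proof.
have /= [_ [_ [_ [_ [_ [th_eq _]]]]]] := eqm i k; move: th_eq.
have -> : om i k + B i k *m eta (ag N m i k) - b i k
    = om i k + (B i k *m xs (ag N m i k) - b i k) by rewrite equilibrium_xs_eta addrA.
rewrite equilibrium_th0 scaler0 sub0r equilibrium_om_fixed => /eqP.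
by rewrite oppr_eq0 -addrA addr_eq0 => /eqP.
Qed.

Lemma equilibrium_lam_residual i :
  \sum_(j < m i) (pplus R (lam i j) - lam i j)
    + (\sum_(j < m i) G i j *m xs (ag N m i j) - \sum_(j < m i) g i j) = 0.
Proof.
have local j : pplus R (lam i j) - lam i j + (G i j *m xs (ag N m i j) - g i j)
    = \sum_l (adj i j l)%:R *: (rho i j - rho i l).
  have /= [_ [_ [_ [_ [_ [_ [_ [lam_eq [cons_eq _]]]]]]]]] := eqm i j.
  move: lam_eq; rewrite cons_eq subr0 -equilibrium_xs_eta => /eqP; rewrite subr_eq0 => /eqP <-.
  by rewrite [- _ + _]addrC !addrA.
rewrite -sumrB -big_split /= (eq_bigr _ (fun j _ => local j)).
exact: laplacian_sum_sym _ (adj_sym i).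
Qed.

End ClosedLoopEquilibrium.

Theorem lemma5
  (R : realType) (N : nat) (m : 'I_N -> nat) (r p : nat)
  (qB : forall i, 'I_(m i) -> nat)
  (B : forall i (j : 'I_(m i)), 'M[R]_(qB i j, r))
  (b : forall i (j : 'I_(m i)), 'cV[R]_(qB i j))
  (G : forall i, 'I_(m i) -> 'M[R]_(p, r))
  (g : forall i, 'I_(m i) -> 'cV[R]_p)
  (J : agent N m -> profile R N m r -> R)
  (gJ : agent N m -> agent N m -> profile R N m r -> 'cV[R]_r)
  (hb ell : R)
  (adj : forall i, rel 'I_(m i)) (abar : rel (agent N m))
  (Ee : forall i, 'I_(m i) -> 'cV[R]_r -> 'M[R]_r)
  (Ce : forall i, 'I_(m i) -> 'cV[R]_r -> 'cV[R]_r -> 'M[R]_r)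
  (De : forall i, 'I_(m i) -> 'cV[R]_r -> 'cV[R]_r)
  (qmu : forall i, 'I_(m i) -> nat)
  (Ups : forall i (j : 'I_(m i)), 'cV[R]_r -> 'cV[R]_r -> 'cV[R]_r -> 'cV[R]_r ->
          'M[R]_(r, qmu i j))
  (mu : forall i (j : 'I_(m i)), 'cV[R]_(qmu i j))
  (dist : forall i, 'I_(m i) -> R -> 'cV[R]_r)
  (alpha beta gamma kappa : R)
  (Hm : forall i, (0 < m i)%N)
  (HA1a : C1_with_grad J gJ)
  (HA1b : strongly_convex_coal B b J hb)
  (HA2 : grad_lipschitz gJ ell)
  (HA3 : slater B b G g)
  (HA4 : graphs_ok adj abar)
  (HEL : EL_regressor Ee Ce De Ups mu)
  (Hdist : bounded_disturbance dist)
  (Hgains : 0 < alpha /\ 0 < beta /\ 0 < gamma /\ 0 < kappa)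
  (xs : profile R N m r) (muh : forall i (j : 'I_(m i)), 'cV[R]_(qmu i j))
  (dh : forall i, 'I_(m i) -> R) (xh eta th : profile R N m r)
  (om : forall i (j : 'I_(m i)), 'cV[R]_(qB i j))
  (lam rho : forall i, 'I_(m i) -> 'cV[R]_p)
  (xi zeta : forall i, 'I_(m i) -> 'I_(m i) -> 'cV[R]_r)
  (s : agent N m -> agent N m -> 'cV[R]_r)
  (Heq : closed_loop_equilibrium B b G g gJ adj abar Ee Ce De Ups dist
           alpha beta gamma kappa xs muh dh xh eta th om lam rho xi zeta s) :
  is_NE B b G g J xs.
Proof.
have [_ [beta_gt0 [_ kappa_gt0]]] := Hgains.
case: HA4 => adj_ok abar_conn.
have adj_sym i : symmetric (adj i) := proj1 (adj_ok i).
have adj_conn i : forall j l, connect (adj i) j l := proj2 (adj_ok i).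
pose j0 i := Ordinal (Hm i).
apply: (KKT_is_NE (proj1 HA1a) _ HA1b _ (fun i => pplus R (lam i (j0 i))) om) => [i k|i|i k].
- rewrite (equilibrium_grad_sum Heq beta_gt0 kappa_gt0 adj_sym adj_conn abar_conn).
  rewrite (equilibrium_xi_diag Heq) (equilibrium_pplus_lam Heq adj_conn i k (j0 i)).
  by rewrite scalerN.
- apply: pplus_consensus_complementary => [j|].
    exact: equilibrium_pplus_lam Heq adj_conn i j (j0 i).
  exact: equilibrium_lam_residual Heq adj_sym i.
- exact: pplus_fixed_complementary (equilibrium_om_fixed Heq i k).
Qed.
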